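(* Let $(A_i,\omega_i)$, $i=1,2$, be commutative unital baric algebras over $K$. Then the map $(I,J)\mapsto I\bowtie J=\{(a,b)\in A_1\bowtie A_2: a\in I,\ b\in J\}$ is a bijection from $\mathcal{I}(A_1,\omega_1)\times\mathcal{I}(A_2,\omega_2)$ onto $\mathcal{I}(A_1\bowtie A_2,\omega_1\bowtie\omega_2)\setminus\{\operatorname{Ker}(\omega_1\bowtie\omega_2)\}$, with inverse $I\mapsto(I_1,I_2)$.
   Context: A baric algebra over a field $K$ is a pair $(A,\omega)$ where $A$ is a (not necessarily associative) $K$-algebra and $\omega:A\to K$ is a nonzero $K$-algebra homomorphism. For baric algebras $(A_1,\omega_1),(A_2,\omega_2)$, $A_1\bowtie A_2$ denotes the vector space $A_1\oplus A_2$ with product $(a_1,a_2)(b_1,b_2)=(a_1b_1+\omega_2(b_2)a_1,\ a_2b_2+\omega_1(b_1)a_2)$, and $\omega_1\bowtie\omega_2(a_1,a_2)=\omega_1(a_1)+\omega_2(a_2)$. For a baric algebra $(A,\omega)$, $\mathcal{I}(A,\omega)$ is the set of two-sided ideals $I$ of $A$ with $I\subseteq\operatorname{Ker}\omega$. For $I\subseteq A_1\bowtie A_2$, $I_1=\{a_1:\exists a_2,\ (a_1,a_2)\in I\}$ and $I_2=\{a_2:\exists a_1,\ (a_1,a_2)\in I\}$. *)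

(* Non-associative algebras are not in MathComp, so a
   (commutative, unital) baric algebra over a field K is given explicitly by
   a K-vector space A (lmodType K), a bilinear product mul and a weight
   omega, subject to the axioms below. *)
From HB Require Import structures.
From mathcomp Require Import all_boot all_order all_algebra.
Set Implicit Arguments. Unset Strict Implicit. Unset Printing Implicit Defensive.
Import GRing.Theory.
Local Open Scope ring_scope.

Section Baric.
Variable K : fieldType.

Definition bilinear_mul (A : lmodType K) (mul : A -> A -> A) : Prop :=
  (forall (k : K) (x y z : A), mul (k *: x + y) z = k *: mul x z + mul y z) /\
  (forall (k : K) (x y z : A), mul z (k *: x + y) = k *: mul z x + mul z y).

Definition baric_weight (A : lmodType K) (mul : A -> A -> A) (omega : A -> K)
  : Prop :=
  (forall (k : K) (x y : A), omega (k *: x + y) = k * omega x + omega y) /\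
  (forall x y : A, omega (mul x y) = omega x * omega y) /\
  (exists x : A, omega x <> 0).

Definition is_baric_algebra (A : lmodType K) (mul : A -> A -> A)
  (omega : A -> K) : Prop :=
  bilinear_mul mul /\ baric_weight mul omega.

Definition is_commutative_unital (A : lmodType K) (mul : A -> A -> A) : Prop :=
  (forall x y : A, mul x y = mul y x) /\
  (exists e : A, forall x : A, mul e x = x /\ mul x e = x).

Definition is_ideal (A : lmodType K) (mul : A -> A -> A) (I : A -> Prop)
  : Prop :=
  I 0 /\
  (forall x y : A, I x -> I y -> I (x + y)) /\
  (forall (k : K) (x : A), I x -> I (k *: x)) /\
  (forall a x : A, I x -> I (mul a x) /\ I (mul x a)).

Definition kerp (A : lmodType K) (omega : A -> K) : A -> Prop :=
  fun x => omega x = 0.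

Definition in_calI (A : lmodType K) (mul : A -> A -> A) (omega : A -> K)
  (I : A -> Prop) : Prop :=
  is_ideal mul I /\ (forall x, I x -> kerp omega x).

Definition bowtie_mul (A1 A2 : lmodType K)
  (mul1 : A1 -> A1 -> A1) (omega1 : A1 -> K)
  (mul2 : A2 -> A2 -> A2) (omega2 : A2 -> K)
  (x y : (A1 * A2)%type) : (A1 * A2)%type :=
  (mul1 x.1 y.1 + omega2 y.2 *: x.1, mul2 x.2 y.2 + omega1 y.1 *: x.2).

Definition bowtie_omega (A1 A2 : lmodType K)
  (omega1 : A1 -> K) (omega2 : A2 -> K) (x : (A1 * A2)%type) : K :=
  omega1 x.1 + omega2 x.2.

Definition bowtie_set (A1 A2 : lmodType K) (I : A1 -> Prop) (J : A2 -> Prop)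
  : (A1 * A2)%type -> Prop :=
  fun x => I x.1 /\ J x.2.

Definition proj_set1 (A1 A2 : lmodType K) (L : (A1 * A2)%type -> Prop)
  : A1 -> Prop := fun a => exists b : A2, L (a, b).

Definition proj_set2 (A1 A2 : lmodType K) (L : (A1 * A2)%type -> Prop)
  : A2 -> Prop := fun b => exists a : A1, L (a, b).

End Baric.

From HB Require Import structures.
From mathcomp Require Import all_boot all_order all_algebra.
From Stdlib Require Import FunctionalExtensionality PropExtensionality.
Set Implicit Arguments. Unset Strict Implicit. Unset Printing Implicit Defensive.
Import GRing.Theory.
Local Open Scope ring_scope.

(* Let e1, e2 be the units of A1, A2; they have weight 1, so the element
   d = (e1, -e2) lies in Ker ω, ω = ω1 ⋈ ω2.  The proof rests on two facts
   about an ideal L ⊆ Ker ω of A1 ⋈ A2: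
   - multiplying (a, b) ∈ L by (e1, 0) and by (0, e2) shows that L contains
     (a + ω2(b) e1, 0) and (0, b + ω1(a) e2), hence also ω1(a) d;
   - if d ∈ L then L ⊇ Ker ω, because every y ∈ Ker ω is an explicit
     combination of d·(y1, 0), d·(0, y2) and d.
   So if L ≠ Ker ω then ω1 vanishes on the first components of L, the two
   products above are (a, 0) and (0, b), and L = L1 ⋈ L2 with L1, L2 ideals
   in the kernels.  Conversely I ⋈ J is an ideal in Ker ω that misses d,
   and projecting I ⋈ J gives back I and J. *)

Lemma pred_ext (T : Type) (P Q : T -> Prop) : (forall x, P x <-> Q x) -> P = Q.
Proof.
by move=> PQ; apply: functional_extensionality => x; apply: propositional_extensionality.
Qed.

Section LinearAlgebra.
Variables (K : fieldType) (A : lmodType K).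

Definition weight_linear (omega : A -> K) : Prop :=
  forall (k : K) (x y : A), omega (k *: x + y) = k * omega x + omega y.

Section Weight.
Variables (omega : A -> K).
Hypothesis omega_lin : weight_linear omega.

Lemma weight0 : omega 0 = 0.
Proof. by have := omega_lin (-1) 0 0; rewrite scaleN1r oppr0 addr0 mulN1r addNr. Qed.

Lemma weightZ (k : K) (x : A) : omega (k *: x) = k * omega x.
Proof. by rewrite -[k *: x]addr0 omega_lin weight0 addr0. Qed.

Lemma weightN (x : A) : omega (- x) = - omega x.
Proof. by rewrite -scaleN1r weightZ mulN1r. Qed.

End Weight.

Section Product.
Variables (mul : A -> A -> A).
Hypothesis mul_bilin : bilinear_mul mul.

Lemma bilinear_mul0l (z : A) : mul 0 z = 0.
Proof.
by case: mul_bilin => mulDl _; have := mulDl (-1) z z z; rewrite !scaleN1r !addNr.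
Qed.

Lemma bilinear_mul0r (z : A) : mul z 0 = 0.
Proof.
by case: mul_bilin => _ mulDr; have := mulDr (-1) z z z; rewrite !scaleN1r !addNr.
Qed.

Lemma bilinear_mulNl (x z : A) : mul (- x) z = - mul x z.
Proof.
case: mul_bilin => mulDl _.
by rewrite -scaleN1r -[_ *: x]addr0 mulDl bilinear_mul0l addr0 scaleN1r.
Qed.

Lemma unit_weight (omega : A -> K) (e : A) :
  baric_weight mul omega -> (forall x, mul e x = x) -> omega e = 1.
Proof.
move=> [_ [omegaM [x /eqP nz_x]]] e_unit.
by apply: (mulIf nz_x); rewrite mul1r -omegaM e_unit.
Qed.

End Product.

Lemma ideal_sub (mul : A -> A -> A) (I : A -> Prop) (x y : A) :
  is_ideal mul I -> I x -> I y -> I (x - y).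
Proof.
move=> [_ [ID [IZ _]]] Ix Iy.
by apply: ID => //; rewrite -scaleN1r; apply: IZ.
Qed.

End LinearAlgebra.

Section Bowtie.
Variables (K : fieldType) (A1 A2 : lmodType K).
Variables (mul1 : A1 -> A1 -> A1) (omega1 : A1 -> K).
Variables (mul2 : A2 -> A2 -> A2) (omega2 : A2 -> K).
Local Notation mul := (bowtie_mul mul1 omega1 mul2 omega2).
Local Notation omega := (bowtie_omega omega1 omega2).

(* A product of ideals lying in the kernels is an ideal in Ker ω: in
   x·y = (x1 y1 + ω2(y2) x1, x2 y2 + ω1(y1) x2) the extra terms are scalar
   multiples of x1, x2 (and vanish when y ∈ I ⋈ J). *)
Lemma bowtie_in_calI (I : A1 -> Prop) (J : A2 -> Prop) :
  in_calI mul1 omega1 I -> in_calI mul2 omega2 J -> in_calI mul omega (bowtie_set I J).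
Proof.
move=> [[I0 [ID [IZ IM]]] Iker] [[J0 [JD [JZ JM]]] Jker]; split; last first.
  by move=> [a b] [/= /Iker Ia /Jker Jb]; rewrite /kerp /bowtie_omega Ia Jb addr0.
split; [by split | split; [|split]].
- by move=> [a b] [c d] [/= Ia Jb] [Ic Jd]; split; [apply: ID | apply: JD].
- by move=> k [a b] [/= Ia Jb]; split; [apply: IZ | apply: JZ].
move=> [a b] [c d] [/= Ic Jd].
rewrite /bowtie_set /bowtie_mul /= (Iker _ Ic) (Jker _ Jd) !scale0r !addr0.
have [Iac Ica] := IM a c Ic; have [Jbd Jdb] := JM b d Jd.
by split; split=> //; [apply: ID => //; apply: IZ | apply: JD => //; apply: JZ].
Qed.

Lemma proj_bowtie1 (I : A1 -> Prop) (J : A2 -> Prop) :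
  J 0 -> proj_set1 (bowtie_set I J) = I.
Proof. by move=> J0; apply: pred_ext => a; split=> [[b []] | Ia] //; exists 0. Qed.

Lemma proj_bowtie2 (I : A1 -> Prop) (J : A2 -> Prop) :
  I 0 -> proj_set2 (bowtie_set I J) = J.
Proof. by move=> I0; apply: pred_ext => b; split=> [[a []] | Jb] //; exists 0. Qed.

Lemma pair_sub (L : A1 * A2 -> Prop) (a c : A1) (b d : A2) :
  is_ideal mul L -> L (a, b) -> L (c, d) -> L (a - c, b - d).
Proof. exact: ideal_sub. Qed.

Lemma pair_scale (L : A1 * A2 -> Prop) (k : K) (a : A1) (b : A2) :
  is_ideal mul L -> L (a, b) -> L (k *: a, k *: b).
Proof. by move=> [_ [_ [LZ _]]] /(LZ k). Qed.

Lemma kerp_bowtie (a : A1) (b : A2) : kerp omega (a, b) -> omega2 b = - omega1 a.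
Proof. by rewrite /kerp /bowtie_omega /= => /eqP; rewrite addrC addr_eq0 => /eqP. Qed.

Hypotheses (mul1_bilin : bilinear_mul mul1) (mul2_bilin : bilinear_mul mul2).
Hypotheses (omega1_lin : weight_linear omega1) (omega2_lin : weight_linear omega2).
Variables (e1 : A1) (e2 : A2).
Hypotheses (e1_unit : forall x, mul1 e1 x = x) (e2_unit : forall x, mul2 e2 x = x).
Hypotheses (e1_weight : omega1 e1 = 1) (e2_weight : omega2 e2 = 1).

Lemma unit_diff_ker : kerp omega (e1, - e2).
Proof. by rewrite /kerp /bowtie_omega /= weightN // e1_weight e2_weight subrr. Qed.

(* I ⋈ J is a proper subset of Ker ω: it does not contain d. *)
Lemma bowtie_neq_ker (I : A1 -> Prop) (J : A2 -> Prop) :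
  in_calI mul1 omega1 I -> bowtie_set I J <> kerp omega.
Proof.
move=> [_ Iker] IJ_ker; have := unit_diff_ker.
rewrite -IJ_ker => -[/= /Iker]; rewrite /kerp e1_weight => /eqP.
by rewrite oner_eq0.
Qed.

Lemma absorb_first (L : A1 * A2 -> Prop) (a : A1) (b : A2) :
  is_ideal mul L -> L (a, b) -> L (a + omega2 b *: e1, 0).
Proof.
move=> [_ [_ [_ LM]]] /(LM (e1, 0))[+ _].
by rewrite /bowtie_mul /= e1_unit bilinear_mul0l // scaler0 addr0.
Qed.

Lemma absorb_second (L : A1 * A2 -> Prop) (a : A1) (b : A2) :
  is_ideal mul L -> L (a, b) -> L (0, b + omega1 a *: e2).
Proof.
move=> [_ [_ [_ LM]]] /(LM (0, e2))[+ _].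
by rewrite /bowtie_mul /= e2_unit bilinear_mul0l // scaler0 addr0.
Qed.

Lemma weight_multiple_unit_diff (L : A1 * A2 -> Prop) (a : A1) (b : A2) :
  in_calI mul omega L -> L (a, b) -> L (omega1 a *: e1, - (omega1 a *: e2)).
Proof.
move=> [Lideal Lker] Lab.
have := pair_sub Lideal (pair_sub Lideal Lab (absorb_first Lideal Lab))
                        (absorb_second Lideal Lab).
rewrite (kerp_bowtie (Lker _ Lab)) !subr0 !opprD !addrA !subrr !add0r.
by rewrite scaleNr opprK.
Qed.

(* An ideal in Ker ω containing d is all of Ker ω: y ∈ Ker ω equals
   d·(y1, 0) - d·(0, y2) - ω1(y1) d. *)
Lemma unit_diff_ideal_ker (L : A1 * A2 -> Prop) :
  in_calI mul omega L -> L (e1, - e2) -> L = kerp omega.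
Proof.
move=> [Lideal Lker] Ld; apply: pred_ext => -[y1 y2]; split; first exact: Lker.
move=> /kerp_bowtie y2_weight; set s := omega1 y1 in y2_weight.
have [_ [_ [_ LM]]] := Lideal.
have Ld_y1 : L (y1, - (s *: e2)).
  have [_] := LM (y1, 0) _ Ld.
  by rewrite /bowtie_mul /= e1_unit bilinear_mul0r // weight0 // scale0r addr0 add0r scalerN.
have Ld_y2 : L (- s *: e1, - y2).
  have [_] := LM (0, y2) _ Ld.
  rewrite /bowtie_mul /= bilinear_mul0r // bilinear_mulNl // e2_unit.
  by rewrite weight0 // y2_weight scale0r addr0 add0r.
have := pair_sub Lideal (pair_sub Lideal Ld_y1 Ld_y2) (pair_scale s Lideal Ld).
by rewrite scaleNr opprK addrK scalerN !opprK addrAC addNr add0r.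
Qed.

Section ProperIdeal.
Variable L : A1 * A2 -> Prop.
Hypotheses (L_calI : in_calI mul omega L) (L_proper : L <> kerp omega).

(* In a proper ideal ω1 vanishes on first components, for otherwise scaling
   ω1(a) d by ω1(a)^-1 would put d in L. *)
Lemma proper_weight0 (a : A1) (b : A2) : L (a, b) -> omega1 a = 0.
Proof.
move=> Lab; apply/eqP; apply: contraT => nz_a; exfalso; apply: L_proper.
apply: (unit_diff_ideal_ker L_calI).
have := pair_scale (omega1 a)^-1 L_calI.1 (weight_multiple_unit_diff L_calI Lab).
by rewrite scalerN !scalerA mulVf // !scale1r.
Qed.

Lemma proper_split (a : A1) (b : A2) : L (a, b) -> L (a, 0) /\ L (0, b).
Proof.
move=> Lab; have w_a := proper_weight0 Lab.
have w_b : omega2 b = 0 by rewrite (kerp_bowtie (L_calI.2 _ Lab)) w_a oppr0.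
have := absorb_first L_calI.1 Lab; have := absorb_second L_calI.1 Lab.
by rewrite w_a w_b !scale0r !addr0.
Qed.

Lemma proper_eq_bowtie : bowtie_set (proj_set1 L) (proj_set2 L) = L.
Proof.
apply: pred_ext => -[a b]; split=> [[[b' Lab'] [a' La'b]] | Lab]; last first.
  by split; [exists b | exists a].
rewrite -[a]addr0 -[b]add0r.
exact: L_calI.1.2.1 _ _ (proper_split Lab').1 (proper_split La'b).2.
Qed.

(* The projections of L are ideals in the kernels: products are computed
   inside L on elements of the form (a, 0), resp. (0, b). *)
Lemma proper_proj1_calI : in_calI mul1 omega1 (proj_set1 L).
Proof.
have [[L0 [LD [LZ LM]]] _] := L_calI; split; last first.
  by move=> a [b /proper_weight0].
split; [|split; [|split]].
- by exists 0.
- by move=> a c [b Lab] [d Lcd]; exists (b + d); apply: LD Lab Lcd.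
- by move=> k a [b Lab]; exists (k *: b); apply: LZ Lab.
move=> a x [b /proper_split[Lx _]]; have [Lax Lxa] := LM (a, 0) _ Lx.
move: Lax Lxa; rewrite /bowtie_mul /= weight0 // !scale0r !addr0.
by split; eexists; eassumption.
Qed.

Lemma proper_proj2_calI : in_calI mul2 omega2 (proj_set2 L).
Proof.
have [[L0 [LD [LZ LM]]] Lker] := L_calI; split; last first.
  by move=> b [a Lab]; rewrite /kerp (kerp_bowtie (Lker _ Lab)) (proper_weight0 Lab) oppr0.
split; [|split; [|split]].
- by exists 0.
- by move=> b d [a Lab] [c Lcd]; exists (a + c); apply: LD Lab Lcd.
- by move=> k b [a Lab]; exists (k *: a); apply: LZ Lab.
move=> b x [a /proper_split[_ Lx]]; have [Lbx Lxb] := LM (0, b) _ Lx.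
move: Lbx Lxb; rewrite /bowtie_mul /= weight0 // !scale0r !addr0.
by split; eexists; eassumption.
Qed.

End ProperIdeal.
End Bowtie.

Theorem proposition5p4 (K : fieldType)
  (A1 : lmodType K) (mul1 : A1 -> A1 -> A1) (omega1 : A1 -> K)
  (A2 : lmodType K) (mul2 : A2 -> A2 -> A2) (omega2 : A2 -> K) :
  is_baric_algebra mul1 omega1 -> is_commutative_unital mul1 ->
  is_baric_algebra mul2 omega2 -> is_commutative_unital mul2 ->
  let mul := bowtie_mul mul1 omega1 mul2 omega2 in
  let omega := bowtie_omega omega1 omega2 in
  (* the map (I,J) |-> I ⋈ J lands in I(A1⋈A2) \ {Ker omega} *)
  (forall (I : A1 -> Prop) (J : A2 -> Prop),
     in_calI mul1 omega1 I -> in_calI mul2 omega2 J ->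
     in_calI mul omega (bowtie_set I J) /\ bowtie_set I J <> kerp omega) /\
  (* L |-> (L_1, L_2) lands in I(A1) x I(A2) and is a right inverse *)
  (forall L : (A1 * A2)%type -> Prop,
     in_calI mul omega L -> L <> kerp omega ->
     in_calI mul1 omega1 (proj_set1 L) /\ in_calI mul2 omega2 (proj_set2 L) /\
     bowtie_set (proj_set1 L) (proj_set2 L) = L) /\
  (* and a left inverse *)
  (forall (I : A1 -> Prop) (J : A2 -> Prop),
     in_calI mul1 omega1 I -> in_calI mul2 omega2 J ->
     proj_set1 (bowtie_set I J) = I /\ proj_set2 (bowtie_set I J) = J).
Proof.
move=> [bilin1 weight1] [_ [e1 e1_unit]] [bilin2 weight2] [_ [e2 e2_unit]] mul omega.
have e1_left : forall x, mul1 e1 x = x by move=> x; case: (e1_unit x).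
have e2_left : forall x, mul2 e2 x = x by move=> x; case: (e2_unit x).
have lin1 : weight_linear omega1 by case: weight1.
have lin2 : weight_linear omega2 by case: weight2.
split; [|split].
- move=> I J I_calI J_calI; split; first exact: bowtie_in_calI.
  have e1_weight := unit_weight weight1 e1_left.
  have e2_weight := unit_weight weight2 e2_left.
  exact: (bowtie_neq_ker lin2 e1_weight e2_weight I_calI).
- move=> L L_calI L_proper; split; [|split].
  + exact: (proper_proj1_calI bilin1 bilin2 lin1 lin2 e1_left e2_left).
  + exact: (proper_proj2_calI bilin1 bilin2 lin1 lin2 e1_left e2_left).
  + exact: (proper_eq_bowtie bilin1 bilin2 lin1 lin2 e1_left e2_left).
- move=> I J [[I0 _] _] [[J0 _] _].
  by split; [exact: proj_bowtie1 | exact: proj_bowtie2].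
Qed.
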